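(* Let $A$ be a linear Nakayama algebra with $n$ simple modules, with vertices labelled $1,\dots,n$ so that the arrows are exactly $i\to i+1$ for $1\le i<n$. Then the Coxeter permutation of $A$ (with respect to this labelling) coincides with Ringel's homological permutation $\hat h$ of $A$.
   Context: A linear Nakayama algebra is $A=KQ/I$, $K$ a field, $Q$ the quiver $1\to 2\to\cdots\to n$ and $I$ an admissible ideal; it has finite global dimension. Modules are finitely generated right modules; $S(i)$, $P(i)$, $I(i)$ denote the simple, indecomposable projective and indecomposable injective modules at vertex $i$. The Cartan matrix $\phi_A$ has entries $\phi_{i,j}=\dim_K e_jAe_i$; the Coxeter matrix is $C_A=-\phi_A^T\phi_A^{-1}$. A Bruhat decomposition of an invertible matrix $M$ is $M=U_1PU_2$ with $U_1,U_2$ invertible upper triangular and $P$ a permutation matrix (uniquely determined). The Coxeter permutation is $p_c$ with $p_c(i)=j$ if the nonzero entry in column $i$ of $P$ (from $C_A=U_1PU_2$) lies in row $j$. Ringel's homological bijection: for a simple module $S$ with injective envelope $I(S)$, let $e(S)=\min\{\operatorname{pd} S,\operatorname{pd} I(S)\}$, let $NS=I(S)$ if $e(S)$ is even and $NS=S$ if $e(S)$ is odd, and set $h(S)=\operatorname{top}\Omega^{e(S)}(NS)$ (top of the $e(S)$-th syzygy). The homological permutation $\hat h$ of $\{1,\dots,n\}$ is defined by $\hat h(i)=j$ iff $h(S(i))\cong S(j)$. *)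

From mathcomp Require Import all_boot all_order all_algebra all_fingroup.
Set Implicit Arguments.
Unset Strict Implicit.
Unset Printing Implicit Defensive.
Import GRing.Theory.

(* Linear Nakayama algebras A = KQ/I, Q : 1 -> 2 -> ... -> n, I admissible.   *)
(* Vertices are labelled 0,...,n-1 (vertex k here = vertex k+1 of the paper). *)
(* Right modules, paths composed left to right, so P(i) = e_i A is spanned by  *)
(* the paths starting at i: P(i) is uniserial with composition factors       *)
(* S(i), S(i+1), ..., S(i + c i - 1).  Such an algebra is determined (up to    *)
(* isomorphism, independently of K) by its Kupisch series c i = dim P(i):      *)
(*   c (n-1) = 1, c i >= 2 for i < n-1 (I contains no arrow, I <= rad^2),      *)
(*   c i <= c (i+1) + 1 (P(i) rad = quotient of P(i+1)).                       *)
(* Every such c is the Kupisch series of a linear Nakayama algebra.            *)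
Definition kupisch (n : nat) (c : nat -> nat) : Prop :=
  (0 < n)%N /\ c n.-1 = 1%N /\
  (forall i : nat, (i.+1 < n)%N -> (2 <= c i)%N /\ (c i <= (c i.+1).+1)%N).

(* Modules: every indecomposable A-module is uniserial, determined by its top  *)
(* S(a) and socle S(b): Some (a, b) is the interval module with composition    *)
(* factors S(a), ..., S(b) (a quotient of P(a), so b - a + 1 <= c a);          *)
(* None is the zero module.  Only modules of this form occur below.            *)
Definition nmod := option (nat * nat).

(* socle index of P(a) *)
Definition psoc (c : nat -> nat) (a : nat) : nat := (a + c a - 1)%N.

(* first syzygy: kernel of the projective cover P(a) -> M(a,b) *)
Definition syz (c : nat -> nat) (M : nmod) : nmod :=
  match M with
  | None => None
  | Some (a, b) => if (b.+1 <= psoc c a)%N then Some (b.+1, psoc c a) else None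
  end.

Definition is_proj (c : nat -> nat) (M : nmod) : bool :=
  match M with
  | None => true
  | Some (a, b) => b == psoc c a
  end.

(* pd M = 0 if M projective, 1 + pd (Omega M) otherwise; the fuel n+1 is       *)
(* always sufficient (tops of successive syzygies strictly increase).          *)
Fixpoint pd_fuel (c : nat -> nat) (fuel : nat) (M : nmod) : nat :=
  match fuel with
  | 0 => 0%N
  | f.+1 => if is_proj c M then 0%N else (pd_fuel c f (syz c M)).+1
  end.
Definition pdim (n : nat) (c : nat -> nat) (M : nmod) : nat := pd_fuel c n.+1 M.

Definition simple_mod (i : nat) : nmod := Some (i, i).

(* injective envelope I(i) of S(i): the longest uniserial module with socle     *)
(* S(i), i.e. top S(k) with k the least vertex such that S(i) occurs in P(k).  *)
Definition inj_top (n : nat) (c : nat -> nat) (i : nat) : nat :=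
  find (fun k => (i < k + c k)%N) (iota 0 n).
Definition inj_mod (n : nat) (c : nat -> nat) (i : nat) : nmod :=
  Some (inj_top n c i, i).

Definition top_mod (M : nmod) : option nat :=
  match M with None => None | Some (a, _) => Some a end.

(* Ringel's homological bijection: h(S(i)) = top Omega^e(NS), returned as the   *)
(* index of the simple module (None would mean a zero module).                 *)
Definition hom_bij (n : nat) (c : nat -> nat) (i : nat) : option nat :=
  let e := minn (pdim n c (simple_mod i)) (pdim n c (inj_mod n c i)) in
  let NS := if odd e then simple_mod i else inj_mod n c i in
  top_mod (iter e (syz c) NS).

Local Open Scope ring_scope.

(* Cartan matrix: phi i j = dim e_j A e_i = [P(j) : S(i)]. *)
Definition cartan_mx (n : nat) (c : nat -> nat) : 'M[rat]_n :=
  \matrix_(i < n, j < n) (if ((j <= i)%N && (i < j + c j)%N) then 1 else 0).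

Definition coxeter_mx (n : nat) (c : nat -> nat) : 'M[rat]_n :=
  - ((cartan_mx n c)^T *m invmx (cartan_mx n c)).

Definition upper_tri (n : nat) (A : 'M[rat]_n) : Prop :=
  forall i j : 'I_n, (j < i)%N -> A i j = 0.

Definition colperm_mx (n : nat) (p : 'S_n) : 'M[rat]_n :=
  \matrix_(i < n, j < n) (if i == p j then 1 else 0).

Definition bruhat_perm (n : nat) (M : 'M[rat]_n) (p : 'S_n) : Prop :=
  exists U1 U2 : 'M[rat]_n,
    [/\ U1 \in unitmx, U2 \in unitmx, upper_tri U1, upper_tri U2
      & M = U1 *m colperm_mx p *m U2].

(* Write f x = x + c x for the end of the projective P(x) = [x, f x).  The
   modules that occur are intervals [p, q) with p < q <= f p, and the syzygy of
   [p, q) is [q, f p).  So the syzygies of [p, q) run along the zigzag chain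
   p, q, f p, f q, f^2 p, ..., and pd [p, q) is the first index at which this chain
   stops increasing.  For S(i) = [i, i+1) and I(i) = [g i, i+1), where g i is the
   least vertex whose projective reaches past i, h(i) is the entry of index e(i) of
   one of the two chains.

   h is injective: if e(j) = 2m+1, then h(j) is not in the image of f^(m+1); if
   e(j) = 2m, then no u with f^m u < h(j) has f^(m+1) u = f (h(j)).  Both follow
   from the minimality of g j, while every i with e(i) > e(j) has h(i) of the
   opposite kind.  Equal depths are separated by the monotonicity of f^m.

   The Cartan matrix C has the indicator of [x, f x) as column x.  Let column i of
   R be the alternating sum of the basis vectors at the chain entries
   w_0, ..., w_e(i) of i.  Then C R telescopes to the indicator of [w_0, i+1), an
   upper unitriangular matrix, while column i of -C^T R vanishes below row h(i).
   As C_A (C R) = -C^T R, this is a Bruhat decomposition of C_A with permutation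
   h, and such a decomposition is unique. *)

From mathcomp Require Import all_boot all_order all_algebra all_fingroup.
From mathcomp Require Import zify.
Set Implicit Arguments.
Unset Strict Implicit.
Unset Printing Implicit Defensive.
Import GRing.Theory.

Section MonotoneChains.
Variables (n : nat) (f : nat -> nat).
Hypotheses (f_homo : {homo f : x y / x <= y}) (f_le : forall x, f x <= n)
  (f_gt : forall x, x < n -> x < f x).

Lemma iter_homo k : {homo iter k f : x y / x <= y}.
Proof. by elim: k => //= k IH x y /IH; apply: f_homo. Qed.

Lemma iter_le k x : x <= n -> iter k f x <= n.
Proof. by case: k => //= k _; apply: f_le. Qed.

Definition chain (p q k : nat) : nat := iter k./2 f (if odd k then q else p).

Lemma chainSS p q k : chain p q k.+2 = f (chain p q k).
Proof. by rewrite /chain /= negbK. Qed.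

Section Admissible.
Variables p q : nat.
Hypotheses (p_lt_q : p < q) (q_le_fp : q <= f p).

Lemma chain_leS k : chain p q k <= chain p q k.+1.
Proof.
suff: chain p q k <= chain p q k.+1 <= chain p q k.+2 by case/andP.
elim: k => [|k /andP[IH1 IH2]]; first by rewrite chainSS /= ltnW.
by rewrite IH2 /= !chainSS f_homo.
Qed.

Lemma chain_homo : {homo chain p q : k l / k <= l}.
Proof. exact: homo_leq leqnn leq_trans chain_leS. Qed.

Lemma chain_le k : chain p q k <= n.
Proof.
have le_qn : q <= n := leq_trans q_le_fp (f_le p).
by rewrite /chain; apply: iter_le; case: odd; last exact: ltnW (leq_trans p_lt_q le_qn).
Qed.

Definition collapse : nat :=
  find (fun k => chain p q k.+1 == chain p q k.+2) (iota 0 n).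

Lemma collapse_spec :
  [/\ collapse < n, forall k, k < collapse -> chain p q k.+1 < chain p q k.+2
    & chain p q collapse.+1 = chain p q collapse.+2].
Proof.
set a := fun k => chain p q k.+1 == chain p q k.+2.
have before k : k < collapse -> chain p q k.+1 < chain p q k.+2.
  move=> lt_k; have /negbT := before_find 0 lt_k.
  have := leq_trans lt_k (find_size a (iota 0 n)); rewrite size_iota => lt_kn.
  by rewrite nth_iota // add0n /a ltn_neqAle chain_leS andbT.
have grow k : k <= collapse -> q + k <= chain p q k.+1.
  elim: k => [|k IH] le_k; first by rewrite addn0.
  by rewrite addnS; apply: leq_trans (before k le_k); apply: IH; apply: ltnW.
have lt_n : collapse < n.
  rewrite ltnNge; apply/negP => /grow; have := chain_le n.+1; lia.
have has_a : has a (iota 0 n) by rewrite has_find size_iota.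
split=> //; apply/eqP.
by have := nth_find 0 has_a; rewrite nth_iota // add0n.
Qed.

End Admissible.

Lemma chain_odd p p' q k : odd k -> chain p q k = chain p' q k.
Proof. by rewrite /chain => ->. Qed.

Lemma iter_sub_iter l L u : l <= L -> iter l f (iter (L - l) f u) = iter L f u.
Proof. by move=> le_lL; rewrite -iterD subnKC. Qed.

Definition least_reach (y : nat) : nat := find (fun u => y < f u) (iota 0 n).

Lemma least_reach_spec y : y < n ->
  [/\ least_reach y <= y, y < f (least_reach y)
    & forall u, u < least_reach y -> f u <= y].
Proof.
move=> lt_yn; set a := fun u => y < f u.
have has_a : has a (iota 0 n).
  by apply/hasP; exists y; [rewrite mem_iota | exact: f_gt].
have lt_n : least_reach y < n by rewrite -(size_iota 0 n) -has_find.
split.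
- rewrite leqNgt; apply/negP => /(before_find 0).
  by rewrite nth_iota // add0n /a f_gt.
- by have := nth_find 0 has_a; rewrite nth_iota.
- move=> u lt_u; have := before_find 0 lt_u.
  rewrite nth_iota ?add0n; last exact: ltn_trans lt_n.
  by move/negbT; rewrite -leqNgt.
Qed.

Lemma iter_lt_least_reach j l u : j < n ->
  iter l f u < iter l f (least_reach j) -> iter l.+1 f u <= iter l f j.
Proof.
move=> lt_jn lt_u; have [_ _ below] := least_reach_spec lt_jn.
rewrite iterSr; apply: iter_homo; apply: below.
by rewrite ltnNge; apply: contraTN lt_u => /(iter_homo l); rewrite -leqNgt.
Qed.

Definition hom_depth (i : nat) : nat :=
  minn (collapse i i.+1) (collapse (least_reach i) i.+1).
Definition hom_src (i : nat) : nat :=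
  if odd (hom_depth i) then i else least_reach i.
Definition hom_top (i : nat) : nat := chain (hom_src i) i.+1 (hom_depth i).

Section Vertex.
Variable i : nat.
Hypothesis lt_in : i < n.

Let lt_i_Si : i < i.+1 := ltnSn i.
Let le_Si_fi : i.+1 <= f i := f_gt lt_in.
Let lt_r_Si : least_reach i < i.+1.
Proof. by case: (least_reach_spec lt_in). Qed.
Let le_Si_fr : i.+1 <= f (least_reach i).
Proof. by case: (least_reach_spec lt_in). Qed.

Lemma hom_src_lt : hom_src i < i.+1.
Proof. by rewrite /hom_src; case: ifP. Qed.

Lemma hom_src_reach : i.+1 <= f (hom_src i).
Proof. by rewrite /hom_src; case: ifP. Qed.

Lemma hom_depth_spec :
  (forall k, k < hom_depth i ->
     chain i i.+1 k.+1 < chain i i.+1 k.+2 /\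
     chain (least_reach i) i.+1 k.+1 < chain (least_reach i) i.+1 k.+2) /\
  chain (hom_src i) i.+1 (hom_depth i).+1 = chain (hom_src i) i.+1 (hom_depth i).+2.
Proof.
have [_ befS atS] := collapse_spec lt_i_Si le_Si_fi.
have [_ befI atI] := collapse_spec lt_r_Si le_Si_fr.
have le_IS k : chain (least_reach i) i.+1 k <= chain i i.+1 k.
  by rewrite /chain; case: odd => //; apply: iter_homo.
have homoS := chain_leS lt_i_Si le_Si_fi; have homoI := chain_leS lt_r_Si le_Si_fr.
split=> [k|]; first by rewrite leq_min => /andP[/befS ? /befI ?].
rewrite /hom_src /hom_depth.
case: (leqP (collapse i i.+1) (collapse (least_reach i) i.+1)) => _.
  case: ifP => // even_e.
  set e := collapse i i.+1 in atS *.
  have : chain (least_reach i) i.+1 e.+1 = chain i i.+1 e.+1.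
    by apply: chain_odd; rewrite /= even_e.
  have := homoI e.+1; have := le_IS e.+2; have := homoS e.+1; lia.
case: ifP => // odd_e.
set e := collapse (least_reach i) i.+1 in atI *.
have : chain i i.+1 e.+2 = chain (least_reach i) i.+1 e.+2.
  by apply: chain_odd; rewrite /= negbK odd_e.
have := homoS e.+1; have := le_IS e.+1; lia.
Qed.

Lemma hom_chain_strict k : k <= hom_depth i ->
  chain (hom_src i) i.+1 k < chain (hom_src i) i.+1 k.+1.
Proof.
have [before _] := hom_depth_spec.
case: k => [|k] le_k; first exact: hom_src_lt.
by have [] := before k le_k; rewrite /hom_src; case: ifP.
Qed.

Lemma hom_top_lt : hom_top i < n.
Proof.
exact: leq_trans (hom_chain_strict (leqnn _)) (chain_le hom_src_lt hom_src_reach _).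
Qed.

Lemma hom_top_end :
  (if odd (hom_depth i) then hom_top i else f (hom_top i)) =
  iter (hom_depth i)./2 f i.+1.
Proof.
have [_ at_e] := hom_depth_spec.
rewrite /hom_top; case: ifP => odd_e; first by rewrite /chain /hom_src odd_e.
by rewrite -chainSS -at_e /chain /= uphalf_half odd_e.
Qed.

Lemma iter_half_depth_lt :
  iter (hom_depth i)./2 f i < iter (hom_depth i)./2 f i.+1.
Proof.
have [before _] := hom_depth_spec.
case E: (hom_depth i)./2 => [|m] //.
have lt_m : m.*2.+1 < hom_depth i by rewrite -gtn_half_double E.
by have [+ _] := before _ lt_m; rewrite /chain /= !negbK odd_double doubleK uphalf_double.
Qed.

Lemma hom_top_image l : l < (hom_depth i)./2 ->
  exists u, iter l.+1 f u = hom_top i.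
Proof.
move=> lt_l.
exists (iter ((hom_depth i)./2 - l.+1) f (if odd (hom_depth i) then i.+1 else hom_src i)).
exact: iter_sub_iter.
Qed.

Lemma hom_top_reach l : l.*2 < hom_depth i ->
  exists2 u, iter l f u < hom_top i & iter l.+1 f u = f (hom_top i).
Proof.
move=> lt_l.
suff [L [u [le_lL lt_u eq_u]]] : exists L u,
    [/\ l <= L, iter L f u < hom_top i & iter L.+1 f u = f (hom_top i)].
  exists (iter (L - l) f u); first by rewrite iter_sub_iter.
  by rewrite -(subSS l L) iter_sub_iter.
have [before at_e] := hom_depth_spec; have end_e := hom_top_end.
case: (boolP (odd (hom_depth i))) => odd_e in end_e *.
  exists (hom_depth i)./2, i; split.
  - by rewrite geq_half_double ltnW.
  - by rewrite end_e iter_half_depth_lt.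
  by rewrite -chainSS -at_e /chain /hom_src /= odd_e uphalf_half odd_e.
case E: (hom_depth i)./2 => [|m].
  by move: lt_l; rewrite -(even_halfK odd_e) E.
exists m, i.+1; split.
- by move: lt_l; rewrite -(even_halfK odd_e) E ltn_double.
- have lt_m : m.*2 < hom_depth i by rewrite -(even_halfK odd_e) E ltn_double.
  have [_ +] := before _ lt_m.
  rewrite /hom_top /hom_src /chain /= (negbTE odd_e) negbK odd_double doubleK.
  by rewrite uphalf_double E.
by rewrite -E.
Qed.

Lemma hom_top_odd_escape u : odd (hom_depth i) ->
  iter (hom_depth i)./2.+1 f u != hom_top i.
Proof.
move=> odd_e; set m := (hom_depth i)./2.
have top_e : hom_top i = iter m f i.+1 by rewrite /hom_top /chain /hom_src odd_e.
have [before _] := hom_depth_spec.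
have lt_m : m.*2 < hom_depth i by rewrite -[X in _ < X](odd_double_half) odd_e.
have [_ +] := before _ lt_m.
rewrite /chain /= negbK odd_double doubleK uphalf_double /= => lt_top.
apply/eqP => eq_u.
case: (ltnP (iter m f u) (iter m f (least_reach i))).
  move/(iter_lt_least_reach lt_in); have := iter_half_depth_lt.
  by rewrite -/m -top_e -eq_u -iterS; lia.
by move/f_homo; rewrite eq_u top_e leqNgt lt_top.
Qed.

Lemma hom_top_even_escape u : ~~ odd (hom_depth i) ->
  iter (hom_depth i)./2 f u < hom_top i ->
  iter (hom_depth i)./2.+1 f u < f (hom_top i).
Proof.
move=> even_e.
have top_e : hom_top i = iter (hom_depth i)./2 f (least_reach i).
  by rewrite /hom_top /chain /hom_src (negbTE even_e).
have := hom_top_end; rewrite (negbTE even_e) => ->.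
rewrite top_e => /(iter_lt_least_reach lt_in) le_u.
exact: leq_ltn_trans le_u iter_half_depth_lt.
Qed.

End Vertex.

Lemma hom_top_neq_depth_lt i j : i < n -> j < n ->
  hom_depth j < hom_depth i -> hom_top i != hom_top j.
Proof.
move=> lt_in lt_jn lt_ji; apply/eqP => eq_top.
case: (boolP (odd (hom_depth j))) => [odd_j|even_j].
  have [|u eq_u] := @hom_top_image i (hom_depth j)./2.
    by rewrite gtn_half_double -[X in X < _]odd_double_half odd_j in lt_ji *.
  by have := hom_top_odd_escape lt_jn u odd_j; rewrite eq_u eq_top eqxx.
have [|u lt_u eq_u] := hom_top_reach lt_in (l := (hom_depth j)./2).
  by rewrite even_halfK.
have := hom_top_even_escape lt_jn even_j; rewrite -eq_top => /(_ u lt_u).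
by rewrite eq_u ltnn.
Qed.

Lemma hom_top_neq_depth_eq i j : i < j -> j < n ->
  hom_depth i = hom_depth j -> hom_top i != hom_top j.
Proof.
move=> lt_ij lt_jn eq_e; apply/eqP => eq_top.
have lt_in := ltn_trans lt_ij lt_jn.
have := hom_top_end lt_jn; rewrite -eq_e -eq_top hom_top_end // => eq_end.
have := iter_half_depth_lt lt_jn; rewrite -eq_e -eq_end.
by rewrite ltnNge iter_homo.
Qed.

Lemma hom_top_inj i j : i < n -> j < n -> hom_top i = hom_top j -> i = j.
Proof.
move=> lt_in lt_jn eq_top.
case: (ltngtP (hom_depth i) (hom_depth j)) => [lt_e|lt_e|eq_e].
- by have := hom_top_neq_depth_lt lt_jn lt_in lt_e; rewrite eq_top eqxx.
- by have := hom_top_neq_depth_lt lt_in lt_jn lt_e; rewrite eq_top eqxx.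
case: (ltngtP i j) => // lt_ij.
- by have := hom_top_neq_depth_eq lt_ij lt_jn eq_e; rewrite eq_top eqxx.
- by have := hom_top_neq_depth_eq lt_ij lt_in (esym eq_e); rewrite eq_top eqxx.
Qed.

End MonotoneChains.

Section IntervalIndicator.
Local Open Scope ring_scope.

Definition itv_ind (a b r : nat) : rat := (a <= r < b)%N%:R.

Lemma itv_ind_split a b d r : (a <= b <= d)%N ->
  itv_ind a d r = itv_ind a b r + itv_ind b d r.
Proof.
move=> /andP[le_ab le_bd]; rewrite /itv_ind.
by case: (leqP a r); case: (ltnP r b); case: (ltnP r d);
  rewrite /= ?add0r ?addr0 // => *; exfalso; lia.
Qed.

Lemma itv_ind0 a b r : (b <= a)%N -> itv_ind a b r = 0.
Proof.
by rewrite /itv_ind; case: (leqP a r) => //= le_ar le_ba; rewrite ltnNge (leq_trans le_ba).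
Qed.

Lemma telescope_itv_ind (w : nat -> nat) r E : (forall k, w k <= w k.+1)%N ->
  \sum_(l < E.+1) (-1) ^+ l * itv_ind (w l) (w l.+2) r =
  itv_ind (w 0%N) (w 1%N) r + (-1) ^+ E * itv_ind (w E.+1) (w E.+2) r.
Proof.
move=> w_homo; elim: E => [|E IH].
  by rewrite big_ord1 expr0 !mul1r (itv_ind_split (b := w 1%N)) // !w_homo.
rewrite big_ord_recr /= IH.
rewrite (itv_ind_split (a := w E.+1) (b := w E.+2) (d := w E.+3)) ?w_homo //.
by rewrite !exprS !mulN1r !mulNr mulrDr opprD addrA addrK.
Qed.

End IntervalIndicator.

Section Bruhat.
Local Open Scope ring_scope.
Variable n : nat.
Implicit Types (A B M U V : 'M[rat]_n) (p q : 'S_n).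

Lemma det_upper_tri A : upper_tri A -> \det A = \prod_i A i i.
Proof.
move=> uA; rewrite -det_tr det_trig; last first.
  by apply/is_trig_mxP => i j lt_ij; rewrite mxE uA.
by apply: eq_bigr => i _; rewrite mxE.
Qed.

Lemma upper_tri_diag_neq0 A i : upper_tri A -> A \in unitmx -> A i i != 0.
Proof.
move=> uA; rewrite unitmxE unitfE det_upper_tri // (bigD1 i) //=.
by rewrite mulf_eq0 negb_or => /andP[].
Qed.

Lemma upper_tri_mul A B : upper_tri A -> upper_tri B -> upper_tri (A *m B).
Proof.
move=> uA uB i j lt_ji; rewrite mxE big1 // => l _.
case: (ltnP l i) => [lt_li|le_il]; first by rewrite uA ?mul0r.
by rewrite uB ?mulr0 // (leq_trans lt_ji).
Qed.

Lemma upper_tri_invmx A : upper_tri A -> A \in unitmx -> upper_tri (invmx A).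
Proof.
move=> uA unitA r; have [m] := ubnP (n - r); elim: m r => // m IH r lt_m k lt_kr.
have : (A *m invmx A) r k = 0.
  by rewrite mulmxV // mxE; case: eqP => // eq_rk; rewrite eq_rk ltnn in lt_kr.
rewrite mxE (bigD1 r) //= big1 => [|l ne_lr].
  rewrite addr0 => /eqP; rewrite mulf_eq0 => /orP[|/eqP //].
  by rewrite (negbTE (upper_tri_diag_neq0 r uA unitA)).
case: (ltngtP l r) => [lt_lr|lt_rl|/val_inj eq_lr]; first by rewrite uA ?mul0r.
- by rewrite (IH l) ?mulr0 //; [have := ltn_ord l; lia | exact: ltn_trans lt_kr lt_rl].
- by rewrite eq_lr eqxx in ne_lr.
Qed.

Lemma colperm_mxE p : colperm_mx p = perm_mx p^-1.
Proof. by apply/matrixP => i j; rewrite !mxE (canF_eq (permKV p)); case: eqP. Qed.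

Lemma perm_eq1_of_le p : (forall k, p k <= k)%N -> p = 1%g.
Proof.
move=> le_p; apply/permP => k; rewrite perm1; have [m] := ubnP k.
elim: m k => // m IH k lt_km; case: (ltngtP (p k) k) => [lt_pk|lt_kp|/val_inj //].
  have /perm_inj eq_pk := IH (p k) (leq_trans lt_pk lt_km).
  by rewrite eq_pk ltnn in lt_pk.
by have := le_p k; rewrite leqNgt lt_kp.
Qed.

Lemma bruhat_perm_unique M p q : bruhat_perm M p -> bruhat_perm M q -> p = q.
Proof.
move=> [U1 [U2 [uU1 uU2 tU1 tU2 defM]]] [V1 [V2 [uV1 uV2 tV1 tV2 defM']]].
set U := invmx V1 *m U1; set V := V2 *m invmx U2.
have eUV : U *m perm_mx p^-1 = perm_mx q^-1 *m V.
  have := congr1 (fun X => invmx V1 *m X *m invmx U2) (etrans (esym defM) defM').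
  rewrite /= !colperm_mxE !mulmxA mulVmx // mul1mx -!mulmxA mulmxV // mulmx1.
  by rewrite /U /V !mulmxA.
have tU : upper_tri U by apply: upper_tri_mul => //; apply: upper_tri_invmx.
have tV : upper_tri V by apply: upper_tri_mul => //; apply: upper_tri_invmx.
have unitU : U \in unitmx by rewrite unitmx_mul unitmx_inv uV1 uU1.
clearbody U V.
have le_pq k : ((p * q^-1)%g k <= k)%N.
  rewrite permM leqNgt; apply/negP => lt_k.
  have := congr1 (fun X : 'M[rat]_n => X (p k) k) eUV.
  rewrite -col_permE -row_permE !mxE /=.
  by rewrite tV // => /eqP; rewrite (negbTE (upper_tri_diag_neq0 _ tU unitU)).
by apply/eqP; rewrite eq_mulgV1 (perm_eq1_of_le le_pq).
Qed.

Lemma bruhat_perm_pivots M V p :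
  M \in unitmx -> upper_tri V -> V \in unitmx ->
  (forall r j : 'I_n, (p j < r)%N -> (M *m V) r j = 0) -> bruhat_perm M p.
Proof.
move=> unitM tV unitV pivots.
exists (M *m V *m (colperm_mx p)^T), (invmx V); split.
- by rewrite !unitmx_mul unitM unitV colperm_mxE unitmx_tr unitmx_perm.
- by rewrite unitmx_inv.
- move=> r a lt_ar; rewrite colperm_mxE tr_perm_mx -col_permE mxE.
  by rewrite pivots ?permKV.
- exact: upper_tri_invmx.
rewrite colperm_mxE tr_perm_mx invgK -(mulmxA (M *m V)) -perm_mxM mulgV perm_mx1 mulmx1.
by rewrite -mulmxA mulmxV // mulmx1.
Qed.

End Bruhat.

Lemma pd_fuel_eq (c : nat -> nat) fuel M K :
  (forall k, k < K -> ~~ is_proj c (iter k (syz c) M)) ->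
  is_proj c (iter K (syz c) M) -> K < fuel -> pd_fuel c fuel M = K.
Proof.
elim: fuel M K => [|fuel IH] M [|K] //= not_proj proj_K lt_K.
- by rewrite proj_K.
- have /negbTE -> := not_proj 0 isT; congr _.+1; apply: IH => //.
  + by move=> k lt_k; rewrite -iterSr; apply: not_proj.
  + by rewrite -iterSr.
Qed.

Section Kupisch.
Variables (n : nat) (c : nat -> nat).
Hypothesis kup : kupisch n c.

Definition proj_end (x : nat) : nat := if x < n then x + c x else n.

Lemma proj_end_leS x : proj_end x <= proj_end x.+1.
Proof.
case: kup => _ [c_last c_step]; rewrite /proj_end.
case: (ltnP x.+1 n) => [lt_Sx|le_nSx].
  by rewrite (ltnW lt_Sx); have [_] := c_step x lt_Sx; lia.
case: ltnP => // lt_x; have -> : x = n.-1 by lia.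
by rewrite c_last addn1 prednK // (leq_ltn_trans _ lt_x).
Qed.

Lemma proj_end_homo : {homo proj_end : x y / x <= y}.
Proof. exact: homo_leq leqnn leq_trans proj_end_leS. Qed.

Lemma proj_end_le x : proj_end x <= n.
Proof.
case: (ltnP x n) => [/ltnW/proj_end_homo|le_nx]; last by rewrite /proj_end ltnNge le_nx.
by rewrite {2}/proj_end ltnn.
Qed.

Lemma proj_end_gt x : x < n -> x < proj_end x.
Proof.
case: kup => _ [c_last c_step] lt_xn; rewrite /proj_end lt_xn -addn1 leq_add2l.
case: (ltnP x.+1 n) => [/c_step[/ltnW]//|le_nSx].
have -> : x = n.-1 by lia.
by rewrite c_last.
Qed.

Local Notation chain := (chain proj_end).
Local Notation hom_depth := (hom_depth n proj_end).
Local Notation hom_src := (hom_src n proj_end).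
Local Notation hom_top := (hom_top n proj_end).

Definition itv_mod (p q : nat) : nmod := Some (p, q.-1).

Section Interval.
Variables p q : nat.
Hypotheses (lt_pq : p < q) (le_q_endp : q <= proj_end p).

Let lt_pn : p < n.
Proof. by apply: leq_trans (proj_end_le p); apply: leq_trans le_q_endp. Qed.

Let psocE : psoc c p = (proj_end p).-1.
Proof. by rewrite /psoc /proj_end lt_pn subn1. Qed.

Lemma syz_itv :
  syz c (itv_mod p q) = if q < proj_end p then itv_mod q (proj_end p) else None.
Proof.
rewrite /= psocE prednK ?(leq_trans _ lt_pq) //.
by have -> : (q <= (proj_end p).-1) = (q < proj_end p) by lia.
Qed.

Lemma is_proj_itv : is_proj c (itv_mod p q) = (q == proj_end p).
Proof. by rewrite /= psocE; have := proj_end_gt lt_pn; lia. Qed.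

End Interval.

Section Chain.
Variables p q : nat.
Hypotheses (lt_pq : p < q) (le_q_endp : q <= proj_end p).

Let chain_le_end k : chain p q k.+1 <= proj_end (chain p q k).
Proof. by rewrite -chainSS (chain_leS proj_end_homo lt_pq le_q_endp). Qed.

Lemma syz_iter_itv k :
  (forall l, l < k -> chain p q l.+1 < chain p q l.+2) ->
  iter k (syz c) (itv_mod p q) = itv_mod (chain p q k) (chain p q k.+1).
Proof.
elim: k => [|k IH] before //=; rewrite IH => [|l lt_l]; last exact/before/ltnW.
have lt_k : chain p q k < chain p q k.+1 by case: k {IH} before => // k; apply.
by rewrite syz_itv ?chain_le_end // -chainSS before.
Qed.

Lemma pdim_itv : pdim n c (itv_mod p q) = collapse n proj_end p q.
Proof.
have [lt_Kn before at_K] := collapse_spec proj_end_homo proj_end_le lt_pq le_q_endp.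
have strict l : l <= collapse n proj_end p q -> chain p q l < chain p q l.+1.
  by case: l => // l; apply: before.
have proj_iter k : k <= collapse n proj_end p q ->
    is_proj c (iter k (syz c) (itv_mod p q)) = (chain p q k.+1 == chain p q k.+2).
  move=> le_k; rewrite syz_iter_itv => [|l lt_l]; last exact/before/(leq_trans lt_l).
  by rewrite is_proj_itv ?strict // chainSS.
apply: pd_fuel_eq => [k lt_k||]; last exact: ltnW lt_Kn.
- by rewrite proj_iter ?neq_ltn ?before // ltnW.
by rewrite proj_iter // at_K.
Qed.

End Chain.

Lemma inj_top_least_reach i : inj_top n c i = least_reach n proj_end i.
Proof.
by apply: eq_in_find => k; rewrite mem_iota add0n /proj_end => /andP[_ ->].
Qed.

Lemma hom_bij_top i : i < n -> hom_bij n c i = Some (hom_top i).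
Proof.
move=> lt_in.
have [le_ri lt_i_end _] := least_reach_spec proj_end_gt lt_in.
rewrite /hom_bij /inj_mod inj_top_least_reach.
rewrite -[simple_mod i]/(itv_mod i i.+1) -[Some (least_reach _ _ i, i)]/(itv_mod _ i.+1).
rewrite !pdim_itv ?proj_end_gt // -/(hom_depth i).
have -> : (if odd (hom_depth i) then itv_mod i i.+1
            else itv_mod (least_reach n proj_end i) i.+1) = itv_mod (hom_src i) i.+1.
  by rewrite /hom_src; case: ifP.
rewrite syz_iter_itv ?(hom_src_lt proj_end_gt) ?(hom_src_reach proj_end_gt) // => l lt_l.
exact: (hom_chain_strict proj_end_homo proj_end_le proj_end_gt lt_in lt_l).
Qed.

Section Matrices.
Local Open Scope ring_scope.
Local Notation hchain i := (chain (hom_src i) i.+1).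

Let src_lt (i : 'I_n) : (hom_src i < i.+1)%N.
Proof. exact: (hom_src_lt proj_end_gt (ltn_ord i)). Qed.

Let src_reach (i : 'I_n) : (i.+1 <= proj_end (hom_src i))%N.
Proof. exact: (hom_src_reach proj_end_gt (ltn_ord i)). Qed.

Let hchain_lt (i : 'I_n) l : (l <= hom_depth i)%N -> (hchain i l < n)%N.
Proof.
move=> le_l; have := chain_le proj_end_le (src_lt i) (src_reach i) l.+1.
exact/leq_trans/(hom_chain_strict proj_end_homo proj_end_le proj_end_gt (ltn_ord i) le_l).
Qed.

Definition alt_mx : 'M[rat]_n :=
  \matrix_(k < n, i < n)
    \sum_(l < (hom_depth i).+1) (-1) ^+ l * (k == hchain i l :> nat)%:R.

Lemma sum_mul_alt_mx (G : nat -> rat) (i : 'I_n) :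
  \sum_(k < n) G k * alt_mx k i =
  \sum_(l < (hom_depth i).+1) (-1) ^+ l * G (hchain i l).
Proof.
under eq_bigr => k _ do rewrite mxE big_distrr.
rewrite exchange_big; apply: eq_bigr => l _ /=.
under eq_bigr => k _ do rewrite mulrCA mulr_natr mulrb.
by rewrite -big_distrr -big_mkcond big_ord1_eq hchain_lt // -ltnS.
Qed.

Lemma cartan_mxE (r k : 'I_n) : cartan_mx n c r k = itv_ind k (proj_end k) r.
Proof. by rewrite mxE /itv_ind /proj_end ltn_ord; case: andP. Qed.

Lemma cartan_alt_mxE (r i : 'I_n) :
  (cartan_mx n c *m alt_mx) r i = itv_ind (hchain i 0) i.+1 r.
Proof.
have [_ collapse_i] := hom_depth_spec proj_end_homo proj_end_le proj_end_gt (ltn_ord i).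
rewrite mxE.
rewrite (eq_bigr (fun k : 'I_n => itv_ind k (proj_end k) r * alt_mx k i)) => [|k _].
  rewrite (sum_mul_alt_mx (fun k => itv_ind k (proj_end k) r)).
  under eq_bigr => l _ do rewrite -chainSS.
  rewrite telescope_itv_ind => [|k].
    by rewrite collapse_i (itv_ind0 _ (leqnn _)) mulr0 addr0.
  exact: (chain_leS proj_end_homo (src_lt i) (src_reach i) k).
by rewrite cartan_mxE.
Qed.

Lemma trmx_cartan_alt_mx_eq0 (r i : 'I_n) : (hom_top i < r)%N ->
  ((cartan_mx n c)^T *m alt_mx) r i = 0.
Proof.
move=> lt_r; rewrite mxE.
rewrite (eq_bigr (fun k : 'I_n => itv_ind r (proj_end r) k * alt_mx k i)) => [|k _].
  rewrite (sum_mul_alt_mx (itv_ind r (proj_end r))) big1 // => l _.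
  have le_l : (hchain i l <= hom_top i)%N.
    exact: (chain_homo proj_end_homo (src_lt i) (src_reach i) (ltn_ord l : l <= _)%N).
  by rewrite /itv_ind leqNgt (leq_ltn_trans le_l lt_r) mulr0.
by rewrite mxE cartan_mxE.
Qed.

Lemma cartan_mx_unit : cartan_mx n c \in unitmx.
Proof.
rewrite unitmxE det_trig; last first.
  by apply/is_trig_mxP => i j lt_ij; rewrite cartan_mxE /itv_ind leqNgt lt_ij.
by rewrite big1 ?unitr1 // => i _; rewrite cartan_mxE /itv_ind leqnn proj_end_gt.
Qed.

Lemma bruhat_perm_coxeter (p : 'S_n) : (forall i, p i = hom_top i :> nat) ->
  bruhat_perm (coxeter_mx n c) p.
Proof.
move=> pE; set C := cartan_mx n c; have unitC : C \in unitmx := cartan_mx_unit.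
have tV : upper_tri (C *m alt_mx).
  by move=> r i lt_ir; rewrite cartan_alt_mxE /itv_ind ltnS (leqNgt r) lt_ir andbF.
apply: (bruhat_perm_pivots (V := C *m alt_mx)) => //.
- rewrite /coxeter_mx -scaleN1r unitmxZ ?unitrN1 //.
  by rewrite unitmx_mul unitmx_tr unitmx_inv unitC.
- rewrite unitmxE det_upper_tri // big1 ?unitr1 // => i _.
  by rewrite cartan_alt_mxE /itv_ind /= ltnSn andbT -ltnS src_lt.
move=> r j lt_r.
rewrite /coxeter_mx mulNmx -mulmxA (mulmxA (invmx C)) mulVmx // mul1mx mxE.
by rewrite trmx_cartan_alt_mx_eq0 ?oppr0 // -pE.
Qed.

End Matrices.

End Kupisch.

Theorem mainTheorem4 (n : nat) (c : nat -> nat) (Hc : kupisch n c) :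
  (exists p : 'S_n, bruhat_perm (coxeter_mx n c) p) /\
  (forall p : 'S_n, bruhat_perm (coxeter_mx n c) p ->
     forall i : 'I_n, hom_bij n c i = Some (nat_of_ord (p i))).
Proof.
have f_homo := proj_end_homo Hc; have f_le := proj_end_le Hc; have f_gt := proj_end_gt Hc.
pose h (i : 'I_n) : 'I_n := Ordinal (hom_top_lt f_homo f_le f_gt (ltn_ord i)).
have h_inj : injective h.
  move=> i j /(congr1 val) /=.
  by move/(hom_top_inj f_homo f_le f_gt (ltn_ord i) (ltn_ord j)) /val_inj.
pose p := perm h_inj.
have pE i : p i = hom_top n (proj_end n c) i :> nat by rewrite permE.
have bp := bruhat_perm_coxeter Hc pE.
split=> [|q bq i]; first by exists p.
by rewrite (bruhat_perm_unique bq bp) hom_bij_top // pE.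
Qed.
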